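(* Let $\Lambda$ be an ordinal with $2\leq\Lambda\leq\omega$. For each $n\in\Lambda$ let $\delta_n$ be a nonempty family of nonempty subsets of $\omega$ with $\bigcap\delta_n=\varnothing$. Suppose that $\delta_0$ has the finite intersection property and that for each $n\in\Lambda\setminus\{0\}$ there is $\gamma_n\subseteq\mathcal{P}(\omega)$ with $|\gamma_n|\leq\omega$, $\gamma_n$ having the finite intersection property, and $\gamma_n\gg\delta_n$. Then there is a sequence $\langle\alpha_n\rangle_{n\in\Lambda}$ of strictly increasing functions $\alpha_n:\omega\to\omega$ such that: if $k\in\Lambda$ and $A_i\in\{\alpha_i[D]: D\in\delta_i\}$ for all $i\leq k$, then $\bigcap_{i\leq k}A_i$ is infinite.
   Context: Ordinals are von Neumann ordinals ($\Lambda=\{0,1,\dots\}$). A family has the finite intersection property if every finite nonempty subfamily has nonempty intersection. For families $\gamma,\delta$ of sets, $\gamma\gg\delta$ means: for every nonempty $D\in\delta$ there is a nonempty $G\in\gamma$ with $G\subseteq D$. $\alpha[D]$ denotes the image of $D$ under $\alpha$. *)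

From Stdlib Require Import List Arith.

(* An ordinal Lambda with 2 <= Lambda <= omega: [None] = omega,
   [Some m] = the finite ordinal m (required 2 <= m). *)
Definition ordLam_ok (L : option nat) : Prop :=
  match L with None => True | Some m => 2 <= m end.

Definition inLam (L : option nat) (n : nat) : Prop :=
  match L with None => True | Some m => n < m end.

Definition nonempty_set (D : nat -> Prop) : Prop := exists x, D x.

Definition FIP (F : (nat -> Prop) -> Prop) : Prop :=
  forall l : list (nat -> Prop), l <> nil -> (forall D, In D l -> F D) ->
    exists x, forall D, In D l -> D x.

Definition countable_family (F : (nat -> Prop) -> Prop) : Prop :=
  exists f : nat -> (nat -> Prop), forall G, F G -> exists k, f k = G.

(* gamma >> delta *)
Definition refines (gamma delta : (nat -> Prop) -> Prop) : Prop :=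
  forall D, delta D -> nonempty_set D ->
    exists G, gamma G /\ nonempty_set G /\ forall x, G x -> D x.

Definition strictly_increasing (f : nat -> nat) : Prop :=
  forall a b, a < b -> f a < f b.

Definition image (f : nat -> nat) (D : nat -> Prop) : nat -> Prop :=
  fun y => exists x, D x /\ f x = y.

Definition infinite_set (P : nat -> Prop) : Prop :=
  forall N, exists x, N <= x /\ P x.

(** Take [alpha_0 := g] for a fast-growing strictly increasing [g], and
    arrange that for [i >= 1] every [alpha_i[D]], [D] in [delta_i], contains
    all but finitely many values of [g].  Enumerate the countable family
    [gamma_i] as [G_0, G_1, ...]; its finite intersections are infinite, so
    there is a strictly increasing [p_i] with [p_i m] in [G_0, ..., G_m], and
    [p_i] is eventually inside each member of [gamma_i], hence of [delta_i].
    If [g] outgrows all the [p_i], the strictly increasing [alpha_i] can be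
    chosen with [alpha_i (p_i m) = g m] for [m >= i].  Since members of
    [delta_0] are infinite, [g[D_0]] meets the common tail of the other
    [alpha_i[D_i]] in infinitely many points. *)
From Stdlib Require Import List Arith Lia ClassicalEpsilon.

Lemma le_list_max_map {A : Type} (f : A -> nat) (l : list A) (a : A) :
  In a l -> f a <= list_max (map f l).
Proof.
  intros Ha. apply (in_map f) in Ha.
  exact (proj1 (Forall_forall _ _) (proj1 (list_max_le _ _) (le_n _)) _ Ha).
Qed.

Lemma succ_monotone (f : nat -> nat) :
  (forall m, f m <= f (S m)) -> forall a b, a <= b -> f a <= f b.
Proof.
  intros Hf a b Hab. induction Hab as [|b _ IH]; [lia|].
  specialize (Hf b). lia.
Qed.

Lemma succ_strictly_increasing (f : nat -> nat) :
  (forall m, f m < f (S m)) -> strictly_increasing f.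
Proof.
  intros Hf a b Hab. induction Hab as [|b _ IH]; [apply Hf|].
  specialize (Hf b). lia.
Qed.

Lemma strictly_increasing_ge (f : nat -> nat) :
  strictly_increasing f -> forall m, m <= f m.
Proof.
  intros Hf m. induction m as [|m IH]; [lia|].
  specialize (Hf m (S m) (Nat.lt_succ_diag_r m)). lia.
Qed.

Lemma strictly_increasing_le_iff (f : nat -> nat) :
  strictly_increasing f -> forall a b, f a <= f b <-> a <= b.
Proof.
  intros Hf a b. split; intros Hab.
  - destruct (le_lt_dec a b) as [|Hba]; [assumption|].
    specialize (Hf b a Hba). lia.
  - destruct (Nat.eq_dec a b) as [->|]; [lia|].
    apply Nat.lt_le_incl, Hf. lia.
Qed.

Definition eventually (P : nat -> Prop) : Prop :=
  exists N, forall m, N <= m -> P m.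

Lemma eventually_forall_le (P : nat -> nat -> Prop) (k : nat) :
  (forall i, i <= k -> eventually (P i)) ->
  eventually (fun m => forall i, i <= k -> P i m).
Proof.
  induction k as [|k IH]; intros Hev.
  - destruct (Hev 0 (le_n 0)) as [N HN].
    exists N. intros m Hm i Hi. replace i with 0 by lia. auto.
  - destruct IH as [N1 HN1]; [auto|].
    destruct (Hev (S k) (le_n _)) as [N2 HN2].
    exists (N1 + N2). intros m Hm i Hi.
    destruct (Nat.eq_dec i (S k)) as [->|]; [apply HN2 | apply HN1]; lia.
Qed.

Lemma infinite_eventually (A B : nat -> Prop) :
  infinite_set A -> eventually B -> infinite_set (fun m => A m /\ B m).
Proof.
  intros HA [N HN] M. destruct (HA (N + M)) as [m [Hm Am]].
  exists m. repeat split; auto; [lia | apply HN; lia].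
Qed.

Lemma FIP_finite_inter_infinite (F : (nat -> Prop) -> Prop) :
  FIP F -> (exists G, F G) -> (forall x, exists G, F G /\ ~ G x) ->
  forall l, (forall G, In G l -> F G) ->
  infinite_set (fun y => forall G, In G l -> G y).
Proof.
  intros HF [G0 HG0] Hmiss l Hl N.
  destruct (choice _ Hmiss) as [miss Hmiss'].
  destruct (HF (G0 :: l ++ map miss (seq 0 N))) as [y Hy]; [discriminate| |].
  - intros D [<-|HD]; [assumption|].
    apply in_app_or in HD as [HD|HD]; [auto|].
    apply in_map_iff in HD as [x [<- _]]. apply Hmiss'.
  - exists y. split.
    + destruct (le_lt_dec N y) as [|HyN]; [assumption|].
      exfalso. apply (proj2 (Hmiss' y)), (Hy (miss y)).
      right. apply in_or_app. right. apply in_map, in_seq. lia.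
    + intros G HG. apply Hy. right. apply in_or_app. auto.
Qed.

Lemma FIP_member_infinite (F : (nat -> Prop) -> Prop) (D : nat -> Prop) :
  FIP F -> (forall x, exists G, F G /\ ~ G x) -> F D -> infinite_set D.
Proof.
  intros HF Hmiss HD N.
  destruct (FIP_finite_inter_infinite F HF (ex_intro _ D HD) Hmiss (D :: nil))
    with (N := N) as [m [Hm HmD]]; [intros G [<-|[]]; assumption|].
  exists m. split; [assumption | apply HmD; left; reflexivity].
Qed.

Lemma countable_family_enum (F : (nat -> Prop) -> Prop) :
  countable_family F -> (exists G, F G) ->
  exists f : nat -> (nat -> Prop), (forall k, F (f k)) /\ forall G, F G -> exists k, f k = G.
Proof.
  intros [f Hf] [G0 HG0].
  exists (fun k => if excluded_middle_informative (F (f k)) then f k else G0).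
  split.
  - intros k. destruct excluded_middle_informative; assumption.
  - intros G HG. destruct (Hf G HG) as [k <-]. exists k.
    destruct excluded_middle_informative; [reflexivity | contradiction].
Qed.

Lemma infinite_diagonal (P : nat -> nat -> Prop) :
  (forall m, infinite_set (P m)) ->
  exists p, strictly_increasing p /\ forall m, P m (p m).
Proof.
  intros HP. destruct (choice _ (fun m => choice _ (HP m))) as [next Hnext].
  exists (fix p m := match m with 0 => next 0 0 | S k => next (S k) (S (p k)) end).
  split.
  - apply succ_strictly_increasing. intros m. apply (Hnext (S m)).
  - intros [|m]; apply Hnext.
Qed.

Lemma refinement_diagonal (gamma delta : (nat -> Prop) -> Prop) :
  (exists D, delta D) -> (forall D, delta D -> nonempty_set D) ->
  (forall x, exists D, delta D /\ ~ D x) ->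
  countable_family gamma -> FIP gamma -> refines gamma delta ->
  exists p, strictly_increasing p /\ forall D, delta D -> eventually (fun m => D (p m)).
Proof.
  intros [D0 HD0] Hne Hmiss Hcount HFIP Href.
  assert (Hsub : forall D, delta D -> exists G, gamma G /\ forall x, G x -> D x).
  { intros D HD. destruct (Href D HD (Hne D HD)) as [G [HG [_ HGD]]]. eauto. }
  assert (Hgamma : exists G, gamma G) by (destruct (Hsub D0 HD0) as [G [HG _]]; eauto).
  destruct (countable_family_enum gamma Hcount Hgamma) as [f [Hf Hsurj]].
  destruct (infinite_diagonal (fun m y => forall G, In G (map f (seq 0 (S m))) -> G y))
    as [p [Hp Hpf]].
  { intros m. apply (FIP_finite_inter_infinite gamma); [assumption..| |].
    - intros x. destruct (Hmiss x) as [D [HD HDx]].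
      destruct (Hsub D HD) as [G [HG HGD]]. exists G. split; auto.
    - intros G HG. apply in_map_iff in HG as [k [<- _]]. apply Hf. }
  exists p. split; [assumption|].
  intros D HD. destruct (Hsub D HD) as [G [HG HGD]].
  destruct (Hsurj G HG) as [j <-].
  exists j. intros m Hm. apply HGD, Hpf, in_map, in_seq. lia.
Qed.

(** Under the hypotheses of [interpolate_at], this is [x |-> x + (q m - p m)]
    on [[p m, p (S m))]. *)
Definition interpolate (p q : nat -> nat) (x : nat) : nat :=
  x + list_max (map (fun m => if p m <=? x then q m - p m else 0) (seq 0 (S x))).

Lemma interpolate_strictly_increasing (p q : nat -> nat) :
  strictly_increasing (interpolate p q).
Proof.
  apply succ_strictly_increasing. intros x. unfold interpolate.
  enough (list_max (map (fun m => if p m <=? x then q m - p m else 0) (seq 0 (S x)))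
          <= list_max (map (fun m => if p m <=? S x then q m - p m else 0) (seq 0 (S (S x)))))
    by lia.
  apply list_max_le, Forall_forall. intros a Ha.
  apply in_map_iff in Ha as [m [<- Hm]]. apply in_seq in Hm.
  apply Nat.le_trans with (if p m <=? S x then q m - p m else 0).
  { destruct (Nat.leb_spec (p m) x), (Nat.leb_spec (p m) (S x)); lia. }
  apply (le_list_max_map (fun m => if p m <=? S x then q m - p m else 0)), in_seq. lia.
Qed.

Lemma interpolate_at (p q : nat -> nat) :
  strictly_increasing p -> (forall m, p m <= q m) ->
  (forall m, q m - p m <= q (S m) - p (S m)) ->
  forall m, interpolate p q (p m) = q m.
Proof.
  intros Hp Hpq Hgap m. unfold interpolate.
  enough (list_max (map (fun m' => if p m' <=? p m then q m' - p m' else 0) (seq 0 (S (p m))))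
          = q m - p m) by (specialize (Hpq m); lia).
  apply Nat.le_antisymm.
  - apply list_max_le, Forall_forall. intros a Ha.
    apply in_map_iff in Ha as [m' [<- _]].
    destruct (Nat.leb_spec (p m') (p m)) as [Hle|]; [|lia].
    apply (succ_monotone (fun k => q k - p k) Hgap).
    exact (proj1 (strictly_increasing_le_iff p Hp m' m) Hle).
  - replace (q m - p m) with (if p m <=? p m then q m - p m else 0)
      by (rewrite Nat.leb_refl; reflexivity).
    apply (le_list_max_map (fun m' => if p m' <=? p m then q m' - p m' else 0)), in_seq.
    pose proof (strictly_increasing_ge p Hp m). lia.
Qed.

Definition column_max (P : nat -> nat -> nat) (m : nat) : nat :=
  list_max (map (fun i => P i m) (seq 0 (S m))).

Fixpoint dominating (P : nat -> nat -> nat) (m : nat) : nat :=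
  match m with
  | 0 => column_max P 0
  | S k => S (dominating P k + column_max P m)
  end.

Lemma dominating_strictly_increasing (P : nat -> nat -> nat) :
  strictly_increasing (dominating P).
Proof. apply succ_strictly_increasing. intros m. simpl. lia. Qed.

Lemma le_column_max (P : nat -> nat -> nat) (i m : nat) :
  i <= m -> P i m <= column_max P m.
Proof. intros Him. apply (le_list_max_map (fun i => P i m)), in_seq. lia. Qed.

Lemma le_dominating (P : nat -> nat -> nat) (i m : nat) :
  i <= m -> P i m <= dominating P m.
Proof.
  intros Him. pose proof (le_column_max P i m Him).
  destruct m; simpl in *; lia.
Qed.

Lemma dominating_interpolate (P : nat -> nat -> nat) (i : nat) :
  strictly_increasing (P i) ->
  forall m, i <= m ->
  interpolate (fun k => P i (k + i)) (fun k => dominating P (k + i)) (P i m) = dominating P m.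
Proof.
  intros Hp m Him. replace m with (m - i + i) by lia.
  apply (interpolate_at (fun k => P i (k + i)) (fun k => dominating P (k + i))).
  - intros a b Hab. apply Hp. lia.
  - intros k. apply le_dominating. lia.
  - intros k. change (S k + i) with (S (k + i)). cbn [dominating].
    pose proof (le_column_max P i (S (k + i)) ltac:(lia)). lia.
Qed.

Definition aligned (P : nat -> nat -> nat) (i : nat) : nat -> nat :=
  match i with
  | 0 => dominating P
  | S _ => interpolate (fun k => P i (k + i)) (fun k => dominating P (k + i))
  end.

Lemma aligned_strictly_increasing (P : nat -> nat -> nat) (i : nat) :
  strictly_increasing (aligned P i).
Proof.
  destruct i; [apply dominating_strictly_increasing | apply interpolate_strictly_increasing].
Qed.

Lemma aligned_image_eventually (P : nat -> nat -> nat) (i : nat) (D : nat -> Prop) :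
  i <> 0 -> strictly_increasing (P i) -> eventually (fun m => D (P i m)) ->
  eventually (fun m => image (aligned P i) D (dominating P m)).
Proof.
  intros Hi Hp [N HN]. exists (N + i). intros m Hm. exists (P i m). split.
  - apply HN. lia.
  - destruct i as [|i]; [contradiction|]. apply dominating_interpolate; [assumption | lia].
Qed.

Lemma inLam_le (L : option nat) (i k : nat) : inLam L k -> i <= k -> inLam L i.
Proof. destruct L; simpl; lia. Qed.

Lemma diagonal_sequence (L : option nat) (delta : nat -> (nat -> Prop) -> Prop) :
  (forall n, inLam L n ->
     (exists D, delta n D) /\
     (forall D, delta n D -> nonempty_set D) /\
     (forall x, exists D, delta n D /\ ~ D x)) ->
  (forall n, inLam L n -> n <> 0 ->
     exists gamma : (nat -> Prop) -> Prop,
       countable_family gamma /\ FIP gamma /\ refines gamma (delta n)) ->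
  forall i, exists p : nat -> nat,
    strictly_increasing p /\
    (inLam L i -> i <> 0 -> forall D, delta i D -> eventually (fun m => D (p m))).
Proof.
  intros Hdelta Hgamma i.
  destruct (classic (inLam L i /\ i <> 0)) as [[Hi Hi0]|Hbad].
  - destruct (Hdelta i Hi) as [Hex [Hne Hmiss]].
    destruct (Hgamma i Hi Hi0) as [gamma [Hcount [HFIP Href]]].
    destruct (refinement_diagonal gamma (delta i)) as [p [Hp Hev]]; auto.
    exists p. auto.
  - exists (fun m => m). split; [intros a b; auto|].
    intros Hi Hi0. exfalso. auto.
Qed.

Theorem lemma13 (L : option nat) (delta : nat -> (nat -> Prop) -> Prop) :
  ordLam_ok L ->
  (forall n, inLam L n ->
     (exists D, delta n D) /\
     (forall D, delta n D -> nonempty_set D) /\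
     (forall x, exists D, delta n D /\ ~ D x)) ->
  FIP (delta 0) ->
  (forall n, inLam L n -> n <> 0 ->
     exists gamma : (nat -> Prop) -> Prop,
       countable_family gamma /\ FIP gamma /\ refines gamma (delta n)) ->
  exists alpha : nat -> nat -> nat,
    (forall n, inLam L n -> strictly_increasing (alpha n)) /\
    (forall k, inLam L k ->
       forall A : nat -> (nat -> Prop),
         (forall i, i <= k -> exists D, delta i D /\ A i = image (alpha i) D) ->
         infinite_set (fun x => forall i, i <= k -> A i x)).
Proof.
  intros _ Hdelta HFIP0 Hgamma.
  destruct (choice _ (diagonal_sequence L delta Hdelta Hgamma)) as [P HP].
  exists (aligned P). split; [intros n _; apply aligned_strictly_increasing|].
  intros k Hk A HA.
  destruct (HA 0 (Nat.le_0_l k)) as [D0 [HD0 HA0]].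
  assert (HD0inf : infinite_set D0).
  { destruct (Hdelta 0 (inLam_le L 0 k Hk (Nat.le_0_l k))) as [_ [_ Hmiss]].
    exact (FIP_member_infinite _ D0 HFIP0 Hmiss HD0). }
  assert (Htail : eventually (fun m => forall i, i <= k -> i <> 0 -> A i (dominating P m))).
  { apply eventually_forall_le. intros i Hi.
    destruct (Nat.eq_dec i 0) as [->|Hi0]; [exists 0; intros; contradiction|].
    destruct (HA i Hi) as [D [HD ->]]. destruct (HP i) as [Hp Hev].
    destruct (aligned_image_eventually P i D Hi0 Hp (Hev (inLam_le L i k Hk Hi) Hi0 D HD))
      as [N HN].
    exists N. auto. }
  intros N. destruct (infinite_eventually _ _ HD0inf Htail N) as [m [Hm [HmD Hmtail]]].
  exists (dominating P m). split.
  - pose proof (strictly_increasing_ge _ (dominating_strictly_increasing P) m). lia.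
  - intros [|i] Hi; [rewrite HA0; exists m; auto | apply Hmtail; [assumption | discriminate]].
Qed.
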